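(* Let $n=4k$ with $k\ge2$, let $\varrho$ be a primitive element of $\mathbb{F}_{2^n}$, let $\omega=\varrho^{(2^k-1)(2^{2k}+1)}$, and let $G(x)=\mathrm{Tr}^{4k}_k(\omega x^{2^k+1})$, with components $G_\lambda(x)=\mathrm{Tr}^k_1(\lambda G(x))=\mathrm{Tr}^n_1(\lambda\omega x^{2^k+1})$ for $\lambda\in\mathbb{F}_{2^k}^*$. Let $\lambda_0=(\omega+\omega^{2^k})^{-1}$. Then $\lambda_0\in\mathbb{F}_{2^k}^*$, $\mathrm{Tr}^k_1(\lambda_0)=1$, and $G_{\lambda_0}$ is a self-dual bent function. For any $\lambda\in\mathbb{F}_{2^k}^*$, letting $\delta$ be the unique element of $\mathbb{F}_{2^k}^*$ with $\delta^{2^k+1}=\lambda\lambda_0^{-1}$, one has $G_\lambda^*(x)=G_{\lambda_0}(\delta^{-1}x)$. In particular, for any $a,b\in\mathbb{F}_{2^{2k}}^*$ with $ab^{2^k}\in\mathbb{F}_{2^k}$, $D_aD_bG_\lambda^*=0$ for all $\lambda\in\mathbb{F}_{2^k}^*$ with $\mathrm{Tr}^k_1(\lambda)=1$.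
   Context: $\mathrm{Tr}^m_1(x)=\sum_{i=0}^{m-1}x^{2^i}$ and $\mathrm{Tr}^{4k}_k(x)=x+x^{2^k}+x^{2^{2k}}+x^{2^{3k}}$. For a bent Boolean function $f$ on $\mathbb{F}_{2^n}$ (i.e. $|W_f(a)|=2^{n/2}$ for all $a$, $W_f(a)=\sum_x(-1)^{f(x)+\mathrm{Tr}^n_1(ax)}$), the dual $f^*$ is defined by $W_f(a)=2^{n/2}(-1)^{f^*(a)}$; $f$ is self-dual if $f^*=f$. $D_aD_bf(x)=f(x)+f(x+a)+f(x+b)+f(x+a+b)$. *)

(* F_{2^n} is modelled as an arbitrary finite field F with #|F| = 2^n. *)
From HB Require Import structures.
From mathcomp Require Import all_boot all_order all_algebra all_field.
Set Implicit Arguments. Unset Strict Implicit. Unset Printing Implicit Defensive.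
Import Order.TTheory GRing.Theory Num.Theory.
Local Open Scope ring_scope.

Section Defs.
Variable F : finFieldType.

Definition tr1 (m : nat) (x : F) : F := \sum_(i < m) x ^+ (2 ^ i).

Definition tr4k (k : nat) (x : F) : F := \sum_(i < 4) x ^+ (2 ^ (k * i)).

Definition inSub (m : nat) (x : F) : bool := x ^+ (2 ^ m) == x.

(* Boolean functions F -> F_2, with F_2 represented by bool *)
Definition walsh (n : nat) (f : F -> bool) (a : F) : int :=
  \sum_(x : F) (-1) ^+ (addb (f x) (tr1 n (a * x) == 1)).

Definition bent (n : nat) (f : F -> bool) : Prop :=
  forall a, `|walsh n f a| = (2 ^ (n %/ 2))%:Z.

(* dual: W_f(a) = 2^(n/2) (-1)^(f^*(a)), i.e. f^*(a) = 1 iff W_f(a) = -2^(n/2) *)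
Definition dual (n : nat) (f : F -> bool) (a : F) : bool :=
  walsh n f a == - (2 ^ (n %/ 2))%:Z.

Definition self_dual (n : nat) (f : F -> bool) : Prop :=
  bent n f /\ forall a, dual n f a = f a.

Definition DD (f : F -> bool) (a b x : F) : bool :=
  addb (addb (f x) (f (x + a))) (addb (f (x + b)) (f (x + a + b))).

Definition Gfun (k : nat) (omega x : F) : F := tr4k k (omega * x ^+ (2 ^ k + 1)).
Definition Gl (k : nat) (omega lam : F) (x : F) : bool :=
  tr1 k (lam * Gfun k omega x) == 1.

End Defs.

From HB Require Import structures.
From mathcomp Require Import all_boot all_order all_algebra all_field.
From mathcomp Require Import ring zify.
Set Implicit Arguments. Unset Strict Implicit. Unset Printing Implicit Defensive.
Import Order.TTheory GRing.Theory Num.Theory.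
Local Open Scope ring_scope.

(* Write q = 2^k, so that x |-> x^q is a Frobenius of order 4.  Since
   omega^(q+1) = 1, this Frobenius sends omega to omega^-1; hence lam0 lies in
   F_q, and Tr^k_1(lam0) = 1 by telescoping.  For lam in F_q^*,
   G_lam(x) = Tr^n_1(lam omega x^(q+1)) is a quadratic form whose polar form,
   against translations v in F_{q^2}, is the linear form
   v |-> Tr^n_1(nu x^(q^3) v) with nu = lam (omega + omega^q).  Averaging the
   Walsh sum over these translations and using orthogonality of the additive
   characters of F_{q^2} concentrates it on one coset of F_{q^2}, giving
     W(a) = 2^(2k) (-1)^Tr^n_1(lam omega a^(q+1) / nu^2).
   Bentness, the dual, and the rescaling by delta (delta^2 = nu) are read off
   from this formula; the dual is again quadratic, so its second derivatives
   are the (constant) values of its polar form. *)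

Section Char2.
Variable F : finFieldType.
Hypothesis charF : 2%N \in [pchar F].

Lemma exprD_exp2n i (x y : F) : (x + y) ^+ (2 ^ i) = x ^+ (2 ^ i) + y ^+ (2 ^ i).
Proof. by apply: exprDn_pchar; rewrite pnatX (eq_pnat _ (pcharf_eq charF)) pnat_id. Qed.

Lemma tr1D m : {morph @tr1 F m : x y / x + y}.
Proof.
by move=> x y; rewrite /tr1 -big_split; apply: eq_bigr => i _; apply: exprD_exp2n.
Qed.

Lemma tr1_0 m : tr1 m (0 : F) = 0.
Proof. by rewrite /tr1 big1 // => i _; rewrite expr0n expn_eq0. Qed.

Lemma tr1_sqr m (x : F) : tr1 m x ^+ 2 = tr1 m (x ^+ 2).
Proof.
have zero_sqr : (0 : F) ^+ (2 ^ 1) = 0 by rewrite expr0n.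
rewrite /tr1 -[in LHS](expn1 2) (big_morph _ (exprD_exp2n 1) zero_sqr).
by apply: eq_bigr => i _; rewrite exprAC.
Qed.

Lemma tr1_addnn m (x : F) : tr1 (m + m) x = tr1 m (x + x ^+ (2 ^ m)).
Proof.
rewrite /tr1 big_split_ord /= -big_split; apply: eq_bigr => i _.
by rewrite exprD_exp2n -exprM -expnD.
Qed.

Lemma tr1_sqr_id m (x : F) : x ^+ (2 ^ m) = x -> tr1 m (x ^+ 2) = tr1 m x.
Proof.
case: m => [|m] xE; first by rewrite /tr1 !big_ord0.
rewrite /tr1 big_ord_recr big_ord_recl /= -exprM -expnS xE expn0 expr1 addrC.
by congr (_ + _); apply: eq_bigr => i _; rewrite -exprM -expnS.
Qed.

Lemma tr1_sqrD m (y : F) : tr1 m (y ^+ 2 + y) = y ^+ (2 ^ m) + y.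
Proof.
elim: m => [|m IHm]; first by rewrite /tr1 big_ord0 expr1 (addrr_pchar2 charF).
rewrite /tr1 big_ord_recr /= -/(tr1 m _) IHm exprD_exp2n -exprM -expnS.
by rewrite [_ + y ^+ (2 ^ m)]addrC addrACA (addrr_pchar2 charF) add0r addrC.
Qed.

Lemma sqrf_inj : injective (fun x : F => x ^+ 2).
Proof. exact: (fmorph_inj (pFrobenius_aut charF)). Qed.

End Char2.

Section AbsoluteTrace.
Variables (F : finFieldType) (n : nat).
Hypothesis charF : 2%N \in [pchar F].
Hypothesis expF : forall x : F, x ^+ (2 ^ n) = x.

Lemma tr1_exp2n j (z : F) : tr1 n (z ^+ (2 ^ j)) = tr1 n z.
Proof.
elim: j => [|j IHj]; first by rewrite expr1.
by rewrite expnSr exprM tr1_sqr_id.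
Qed.

Lemma tr1_01 (z : F) : tr1 n z = 0 \/ tr1 n z = 1.
Proof.
have : tr1 n z ^+ 2 = tr1 n z by rewrite tr1_sqr // -[2%N]/(2 ^ 1)%N tr1_exp2n.
move/eqP; rewrite -subr_eq0 -[X in _ - X]mulr1 expr2 -mulrBr mulf_eq0 subr_eq0.
by case/orP=> /eqP; [left | right].
Qed.

Lemma tr1_eq1D (y z : F) :
  (tr1 n (y + z) == 1) = (tr1 n y == 1) (+) (tr1 n z == 1).
Proof.
rewrite tr1D //; have one_neq0 := oner_neq0 F.
by case: (tr1_01 y) => ->; case: (tr1_01 z) => ->;
  rewrite ?addr0 ?add0r ?(addrr_pchar2 charF) ?eqxx // eq_sym (negbTE one_neq0).
Qed.

Definition chi (z : F) : int := (-1) ^+ (tr1 n z == 1).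

Lemma chiD : {morph chi : y z / y + z >-> y * z}.
Proof. by move=> y z; rewrite /chi tr1_eq1D signr_addb. Qed.

Lemma chi0 : chi 0 = 1.
Proof. by rewrite /chi tr1_0 eq_sym oner_eq0. Qed.

Lemma chi_exp2n j (z : F) : chi (z ^+ (2 ^ j)) = chi z.
Proof. by rewrite /chi tr1_exp2n. Qed.

End AbsoluteTrace.

Section FrobeniusPower.
Variables (F : finFieldType) (k : nat).
Hypothesis charF : 2%N \in [pchar F].
Hypothesis expF : forall x : F, x ^+ (2 ^ (4 * k)) = x.
Local Notation n := (4 * k)%N.
Local Notation Fq2 := (@inSub F (2 * k)).

Definition frob (x : F) := x ^+ (2 ^ k).

Lemma frobD : {morph frob : x y / x + y}.
Proof. exact: exprD_exp2n. Qed.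

Lemma frobM : {morph frob : x y / x * y}.
Proof. by move=> x y; rewrite /frob exprMn. Qed.

Lemma frobV : {morph frob : x / x^-1}.
Proof. by move=> x; rewrite /frob exprVn. Qed.

Lemma frob_sqr (x : F) : frob (x ^+ 2) = frob x ^+ 2.
Proof. exact: exprAC. Qed.

Lemma frob_frob (x : F) : frob (frob x) = x ^+ (2 ^ (2 * k)).
Proof. by rewrite /frob -exprM -expnD addnn -mul2n. Qed.

Lemma frob4 (x : F) : frob (frob (frob (frob x))) = x.
Proof.
by rewrite /frob -!exprM -!expnD (_ : k + (k + (k + k)) = n)%N ?expF //; lia.
Qed.

Lemma frob_inj : injective frob.
Proof. by move=> x y xy; rewrite -(frob4 x) -(frob4 y) xy. Qed.

Lemma inSub2E (x : F) : Fq2 x = (frob (frob x) == x).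
Proof. by rewrite frob_frob. Qed.

Lemma tr1_4k (z : F) : tr1 n z = tr1 (2 * k) (z + frob (frob z)).
Proof. by rewrite frob_frob -(tr1_addnn charF) -mulnDl. Qed.

Lemma tr1_2k (z : F) : tr1 (2 * k) z = tr1 k (z + frob z).
Proof. by rewrite mul2n -addnn tr1_addnn. Qed.

Lemma exp2n_frob i (x : F) : x ^+ (2 ^ (k * i)) = iter i frob x.
Proof.
elim: i => [|i IHi]; first by rewrite muln0 expr1.
by rewrite mulnS expnD mulnC exprM IHi.
Qed.

Lemma tr1_tr4k (z : F) : tr1 n z = tr1 k (tr4k k z).
Proof.
rewrite tr1_4k tr1_2k /tr4k !big_ord_recr big_ord0 /= !exp2n_frob /= !frobD.
by congr (tr1 k _); ring.
Qed.

Lemma tr4kZ (lam z : F) : frob lam = lam -> tr4k k (lam * z) = lam * tr4k k z.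
Proof.
move=> lamE; rewrite /tr4k mulr_sumr; apply: eq_bigr => i _.
by rewrite !exp2n_frob; elim: (nat_of_ord i) => //= j ->; rewrite frobM lamE.
Qed.

Lemma chi_subfield (v : F) : frob (frob v) = v -> chi n v = 1.
Proof.
by move=> vE; rewrite /chi tr1_4k vE (addrr_pchar2 charF) tr1_0 eq_sym oner_eq0.
Qed.

Section CharacterSum.
Variable c : F.
Hypothesis c_sub : frob (frob c) = c.
Hypothesis tr1c : tr1 (2 * k) c = 1.

Lemma chi_nondegenerate (w : F) : frob (frob w) != w ->
  exists2 v, frob (frob v) = v & chi n (w * v) = -1.
Proof.
move=> wNsub; set u := w + frob (frob w).
have u_neq0 : u != 0 by rewrite /u -[frob (frob w)](oppr_pchar2 charF) subr_eq0 eq_sym.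
have uE : frob (frob u) = u by rewrite /u !frobD frob4 addrC.
exists (c / u); first by rewrite !frobM !frobV uE c_sub.
rewrite /chi tr1_4k !frobM !frobV uE c_sub -mulrDl -/u mulrCA mulfV // mulr1.
by rewrite tr1c eqxx expr1.
Qed.

Lemma sum_chi_subfield (w : F) :
  \sum_(v in Fq2) chi n (w * v)
    = if frob (frob w) == w then #|Fq2|%:R else 0.
Proof.
case: eqP => [wE | /eqP/chi_nondegenerate [v0 v0_sub chi_wv0]].
  rewrite -sumr_const; apply: eq_bigr => v; rewrite unfold_in -frob_frob => /eqP vE.
  by rewrite chi_subfield // !frobM wE vE.
(* Translating v by v0 flips the sign of every term. *)
set S := (X in X = _); suff : - S == S by rewrite eqNr => /eqP.
rewrite {2}/S (reindex_inj (addIr v0)) /= -sumrN.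
rewrite (eq_bigl Fq2) => [|v]; last first.
  by rewrite unfold_in -frob_frob inSub2E !frobD v0_sub; apply/eqP/eqP => [/addIr | ->].
apply/eqP/eq_bigr => v _.
by rewrite mulrDr chiD // chi_wv0 mulrN1.
Qed.

End CharacterSum.

Lemma subfield_sqrt (x : F) : frob x = x -> exists2 d, frob d = d & d ^+ 2 = x.
Proof.
move=> xE; have [g sqrK gK] := injF_bij (sqrf_inj charF).
exists (g x); last exact: gK.
by apply: (sqrf_inj charF); rewrite /= -frob_sqr gK xE.
Qed.

Lemma subfield_exp_succ (d : F) : frob d = d -> d ^+ (2 ^ k + 1) = d ^+ 2.
Proof. by move=> dE; rewrite addn1 exprSr -/(frob d) dE expr2. Qed.

Lemma DD_quadratic (f : F -> bool) (K : F) :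
    (forall y, f y = (tr1 n (K * (frob y * y)) == 1)) ->
  forall a b x, DD f a b x = (tr1 n (K * (frob a * b + a * frob b)) == 1).
Proof.
move=> fE a b x; rewrite /DD !fE -!tr1_eq1D //; congr (tr1 n _ == 1).
pose Z := frob x * x + frob x * x + frob x * (a + b) + x * (frob a + frob b)
          + frob a * a + frob b * b.
transitivity (K * ((Z + Z) + (frob a * b + a * frob b))); first by rewrite /Z !frobD; ring.
by rewrite (addrr_pchar2 charF) add0r.
Qed.

Lemma chi_frob (z : F) : chi n (frob z) = chi n z.
Proof. exact: chi_exp2n. Qed.

Lemma Gl_tr1 (om lam x : F) : frob lam = lam ->
  Gl k om lam x = (tr1 n (lam * om * (frob x * x)) == 1).
Proof. by move=> lamE; rewrite /Gl /Gfun -tr4kZ // -tr1_tr4k addn1 exprSr mulrA. Qed.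

Section UnitCircle.
Variable om : F.
Hypothesis om_circle : frob om * om = 1.
Hypothesis om_neq1 : om != 1.

Lemma om_neq0 : om != 0.
Proof. by apply: contra_eq_neq om_circle => ->; rewrite mulr0 eq_sym oner_neq0. Qed.

Lemma frob_om : frob om = om^-1.
Proof. by rewrite -[frob om]mulr1 -(divff om_neq0) mulrA om_circle mul1r. Qed.

Lemma frob_frob_om : frob (frob om) = om.
Proof. by rewrite frob_om frobV frob_om invrK. Qed.

Lemma om_add_frob_neq0 : om + frob om != 0.
Proof.
apply: contra om_neq1; rewrite -[frob om](oppr_pchar2 charF) subr_eq0 => /eqP omE.
have om_sqr : om ^+ 2 = 1 by rewrite expr2 {1}omE om_circle.
have : (om + 1) ^+ (2 ^ 1) == 0.
  by rewrite exprD_exp2n // expn1 om_sqr expr1n (addrr_pchar2 charF).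
by rewrite expf_eq0 /= addr_eq0 (oppr_pchar2 charF).
Qed.

Let lam0 := (om + frob om)^-1.

Lemma frob_lam0 : frob lam0 = lam0.
Proof. by rewrite /lam0 frobV frobD frob_frob_om addrC. Qed.

Lemma lam0_neq0 : lam0 != 0.
Proof. by rewrite invr_eq0 om_add_frob_neq0. Qed.

(* y := om * lam0 satisfies y^2 + y = lam0^2, so Tr(lam0) = Tr(lam0^2)
   telescopes to y^q + y = 1. *)
Lemma tr1_lam0 : tr1 k lam0 = 1.
Proof.
have lam0K : lam0 * (om + frob om) = 1 by rewrite mulVf // om_add_frob_neq0.
set y := om * lam0.
have : y ^+ 2 + y = lam0 ^+ 2 * (om ^+ 2 + om ^+ 2 + frob om * om)
                    + om * lam0 * (1 - lam0 * (om + frob om)) by rewrite /y; ring.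
rewrite (addrr_pchar2 charF) add0r om_circle mulr1 lam0K subrr mulr0 addr0 => yE.
rewrite -(tr1_sqr_id frob_lam0) -yE tr1_sqrD // -/(frob y) /y frobM frob_lam0.
by rewrite -mulrDl mulrC addrC lam0K.
Qed.

Lemma frob_frob_om_lam0 : frob (frob (om * lam0 ^+ 2)) = om * lam0 ^+ 2.
Proof. by rewrite frobM frob_sqr frobM frob_sqr !frob_lam0 frob_frob_om. Qed.

Lemma tr1_om_lam0 : tr1 (2 * k) (om * lam0 ^+ 2) = 1.
Proof.
rewrite tr1_2k frobM frob_sqr frob_lam0 -mulrDl mulrC expr2 -mulrA.
by rewrite mulVf ?om_add_frob_neq0 // mulr1 tr1_lam0.
Qed.

Section QuadraticWalsh.
Variable lam : F.
Hypotheses (lam_sub : frob lam = lam) (lam_neq0 : lam != 0).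
Let nu := lam * (om + frob om).
Let quad a x := lam * om * (frob x * x) + a * x.
Let lin a x := nu * frob (frob (frob x)) + a.
Let N : int := #|Fq2|%:R.

Let nu_neq0 : nu != 0.
Proof. by rewrite mulf_neq0 ?om_add_frob_neq0. Qed.

Let frob_nu : frob nu = nu.
Proof. by rewrite /nu frobM frobD frob_frob_om lam_sub addrC. Qed.

Lemma chi_quad_shift (a x v : F) : frob (frob v) = v ->
  chi n (quad a (x + v)) = chi n (quad a x) * chi n (lin a x * v).
Proof.
move=> vE.
have chi_quad_v : chi n (lam * om * (frob v * v)) = 1.
  by apply: chi_subfield; rewrite !frobM !lam_sub frob_frob_om vE.
(* chi is frob-invariant: applying frob^3 to the first polar term pairs it
   with the second one. *)
have chi_polar : chi n (lam * om * (frob x * v) + lam * om * (x * frob v))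
               = chi n (nu * frob (frob (frob x)) * v).
  rewrite chiD // -[chi n (lam * om * (frob x * v))]chi_frob -chi_frob -chi_frob.
  rewrite -chiD // -[RHS]chi_frob; congr (chi n _).
  by rewrite !frobM frob4 !lam_sub frobD !frob_frob_om vE; ring.
have -> : quad a (x + v) = quad a x + lam * om * (frob v * v)
    + (lam * om * (frob x * v) + lam * om * (x * frob v)) + a * v.
  by rewrite /quad frobD; ring.
rewrite /lin mulrDl; move: (quad a x) => q.
by rewrite chiD // chiD // chi_polar chiD // chi_quad_v mulr1 chiD // mulrA.
Qed.

Lemma walsh_Gl_quad (a : F) : walsh n (Gl k om lam) a = \sum_x chi n (quad a x).
Proof. by apply: eq_bigr => x _; rewrite Gl_tr1 // -tr1_eq1D. Qed.

Lemma card_mul_sum_quad (a : F) :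
  N * \sum_x chi n (quad a x)
  = \sum_x chi n (quad a x) * (if frob (frob (lin a x)) == lin a x then N else 0).
Proof.
rewrite /N mulr_natl -sumr_const.
rewrite (eq_bigr (fun v => \sum_x chi n (quad a x) * chi n (lin a x * v))); last first.
  move=> v; rewrite unfold_in -frob_frob => /eqP vE.
  by rewrite (reindex_inj (addIr v)); apply: eq_bigr => x _; apply: chi_quad_shift.
rewrite exchange_big /=; apply: eq_bigr => x _.
by rewrite -mulr_sumr (sum_chi_subfield frob_frob_om_lam0 tr1_om_lam0).
Qed.

Lemma sum_quad_coset (a : F) :
  \sum_x chi n (quad a x) * (if frob (frob (lin a x)) == lin a x then N else 0)
  = N * N * chi n (quad a (frob a / nu)).
Proof.
(* The x with lin a x in F_{q^2} form the coset c0 + F_{q^2}, on which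
   chi (quad a) is constant. *)
set c0 := frob a / nu.
have lin_c0 : lin a c0 = 0.
  by rewrite /lin /c0 !frobM !frobV frob4 !frob_nu mulrCA mulfV // mulr1 (addrr_pchar2 charF).
have lin_shift v : lin a (c0 + v) = nu * frob (frob (frob v)).
  by rewrite -[RHS]add0r -lin_c0 /lin !frobD; ring.
rewrite (eq_bigr (fun x => if frob (frob (lin a x)) == lin a x
                          then chi n (quad a x) * N else 0)); last first.
  by move=> x _; case: ifP; rewrite ?mulr0.
rewrite -big_mkcond /= (reindex_inj (addrI c0)) /= (eq_bigl (fun v => v \in Fq2)) => [|v]; last first.
  rewrite lin_shift unfold_in -frob_frob frobM frob_nu frobM frob_nu frob4 (inj_eq (mulfI nu_neq0)).
  by rewrite (inj_eq frob_inj) eq_sym.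
rewrite (eq_bigr (fun=> chi n (quad a c0) * N)) => [|v]; last first.
  rewrite unfold_in -frob_frob => /eqP vE.
  by rewrite chi_quad_shift // lin_c0 mul0r chi0 mulr1.
by rewrite sumr_const -mulr_natl -/N [chi _ _ * N]mulrC mulrA.
Qed.

Lemma chi_quad_vertex (a : F) :
  chi n (quad a (frob a / nu)) = chi n (lam * om * (frob a * a) / nu ^+ 2).
Proof.
rewrite /quad chiD // -[chi n (lam * om * _)]chi_frob -chi_frob -chi_frob -chiD //.
congr (chi n _); rewrite !frobM !frobV !frob_nu !frob4 !lam_sub frob_frob_om.
transitivity (lam * om * (frob a * a) / nu ^+ 2
  + (lam * frob om * (frob a * a) + lam * frob om * (frob a * a)) / nu ^+ 2
  + a * frob a * (nu - lam * (om + frob om)) / nu ^+ 2); first by field.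
by rewrite (addrr_pchar2 charF) subrr mulr0 !mul0r !addr0.
Qed.

Lemma walsh_Gl (a : F) : walsh n (Gl k om lam) a = N * chi n (lam * om * (frob a * a) / nu ^+ 2).
Proof.
have N_neq0 : N != 0.
  by rewrite pnatr_eq0 -lt0n; apply/card_gt0P; exists 0; rewrite unfold_in expr0n expn_eq0.
apply: (mulfI N_neq0).
by rewrite walsh_Gl_quad card_mul_sum_quad sum_quad_coset chi_quad_vertex [RHS]mulrA.
Qed.

End QuadraticWalsh.

Hypothesis card_Fq2 : #|Fq2| = (2 ^ (2 * k))%N.

Let half_n : (n %/ 2 = 2 * k)%N.
Proof. lia. Qed.

Lemma bent_Gl (lam : F) : frob lam = lam -> lam != 0 -> bent n (Gl k om lam).
Proof.
move=> lam_sub lam_neq0 a.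
by rewrite walsh_Gl // card_Fq2 half_n normrM normr_sign mulr1 normr_nat natz.
Qed.

Lemma dual_Gl (lam x : F) : frob lam = lam -> lam != 0 ->
  dual n (Gl k om lam) x
  = (tr1 n (lam * om * (frob x * x) / (lam * (om + frob om)) ^+ 2) == 1).
Proof.
move=> lam_sub lam_neq0; rewrite /dual walsh_Gl // card_Fq2 half_n /chi natz.
case: (_ == 1); first by rewrite expr1 mulrN1 eqxx.
by rewrite expr0 mulr1 eq_sym eqNr eqz_nat expn_eq0.
Qed.

Lemma dual_Gl_rescale (lam d : F) : frob lam = lam -> frob d = d -> d != 0 ->
    d ^+ 2 = lam / lam0 ->
  forall x, dual n (Gl k om lam) x = Gl k om lam0 (d^-1 * x).
Proof.
move=> lam_sub d_sub d_neq0 dE x.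
have lamE : lam = d ^+ 2 * lam0 by rewrite dE divfK ?lam0_neq0.
have lam_neq0 : lam != 0 by rewrite lamE mulf_neq0 ?expf_neq0 ?lam0_neq0.
rewrite dual_Gl // Gl_tr1 ?frob_lam0 //; congr (tr1 n _ == 1).
have := om_add_frob_neq0; rewrite frobM frobV d_sub lamE /lam0 => om_neq.
by field; rewrite d_neq0 om_neq.
Qed.

Lemma self_dual_Gl_lam0 : self_dual n (Gl k om lam0).
Proof.
split; first exact: (bent_Gl frob_lam0 lam0_neq0).
move=> x; rewrite (@dual_Gl_rescale _ 1) ?invr1 ?mul1r ?frob_lam0 ?oner_neq0 //.
  by rewrite /frob expr1n.
by rewrite expr1n divff ?lam0_neq0.
Qed.

Lemma dual_Gl_delta (lam : F) : lam != 0 -> inSub k lam ->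
  let P := fun d : F => [/\ d != 0, inSub k d & d ^+ (2 ^ k + 1) = lam / lam0] in
  (exists d, P d) /\ (forall d1 d2, P d1 -> P d2 -> d1 = d2) /\
  (forall d, P d -> forall x, dual n (Gl k om lam) x = Gl k om lam0 (d^-1 * x)).
Proof.
move=> lam_neq0 lam_sub P; have {}lam_sub : frob lam = lam by apply/eqP.
have ratio_sub : frob (lam / lam0) = lam / lam0 by rewrite frobM frobV frob_lam0 lam_sub.
split; [|split].
- have [d d_sub dE] := subfield_sqrt ratio_sub.
  exists d; split; [|exact/eqP|by rewrite subfield_exp_succ].
  have ratio_neq0 : lam / lam0 != 0 by rewrite mulf_neq0 // invr_eq0 lam0_neq0.
  by apply: contraNneq ratio_neq0 => d0; rewrite -dE d0 expr0n.
- move=> d1 d2 [_ /eqP d1_sub d1E] [_ /eqP d2_sub d2E]; apply: (sqrf_inj charF).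
  by rewrite /= -!subfield_exp_succ // d1E d2E.
- move=> d [d_neq0 /eqP d_sub dE]; apply: dual_Gl_rescale => //.
  by rewrite -subfield_exp_succ.
Qed.

Lemma DD_dual_Gl (lam a b : F) : frob lam = lam -> lam != 0 ->
    inSub (2 * k) b -> inSub k (a * b ^+ (2 ^ k)) ->
  forall x, DD (dual n (Gl k om lam)) a b x = false.
Proof.
move=> lam_sub lam_neq0 b_sub ab_sub x.
have {}b_sub : frob (frob b) = b by apply/eqP; rewrite -inSub2E.
have {}ab_sub : frob (a * frob b) = a * frob b by apply/eqP.
have polar_eq0 : frob a * b + a * frob b = 0.
  by rewrite -{1}b_sub -frobM ab_sub (addrr_pchar2 charF).
have dualE y : dual n (Gl k om lam) y
    = (tr1 n (lam * om / (lam * (om + frob om)) ^+ 2 * (frob y * y)) == 1).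
  by rewrite dual_Gl // mulrAC.
by rewrite (DD_quadratic dualE) polar_eq0 mulr0 tr1_0 eq_sym oner_eq0.
Qed.

End UnitCircle.
End FrobeniusPower.

Lemma card_inSub_half (F : finFieldType) (m : nat) (rho : F) : (0 < m)%N ->
  (2 ^ (2 * m) - 1).-primitive_root rho -> #|@inSub F m| = (2 ^ m)%N.
Proof.
move=> m_gt0; set Q := (2 ^ m)%N.
have Q_gt1 : (1 < Q)%N by rewrite -{1}(expn0 2) ltn_exp2l.
rewrite mul2n -addnn expnD -/Q; set N := (Q * Q - 1)%N => rho_prim.
have inSubE v : (v \in @inSub F m) = (v ^+ Q == v) by rewrite unfold_in.
apply/eqP; rewrite eqn_leq; apply/andP; split.
  pose p : {poly F} := 'X^Q - 'X.
  have size_p : size p = Q.+1.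
    by rewrite /p size_polyDl ?size_polyN ?size_polyX ?size_polyXn.
  rewrite cardE -ltnS -size_p max_poly_roots ?enum_uniq //.
    by rewrite -size_poly_eq0 size_p.
  apply/allP => v; rewrite mem_enum inSubE => /eqP vE.
  by rewrite /root /p !hornerE vE subrr.
have rho_neq0 : rho != 0.
  apply/eqP => rho0; have := prim_expr_order rho_prim; rewrite rho0 expr0n.
  have -> : (N == 0) = false by apply/negbTE; rewrite /N; nia.
  by move/eqP; rewrite eq_sym oner_eq0.
pose roots := 0 :: [seq rho ^+ ((Q + 1) * j) | j <- iota 0 (Q - 1)].
have size_roots : size roots = Q by rewrite /= size_map size_iota; lia.
rewrite -size_roots cardE; apply: uniq_leq_size.
  rewrite /= map_inj_in_uniq ?iota_uniq ?andbT.
    by apply/mapP => -[j _] /esym/eqP; rewrite expf_eq0 (negbTE rho_neq0) andbF.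
  move=> i j; rewrite !mem_iota !add0n => i_lt j_lt /eqP.
  by rewrite (eq_prim_root_expr rho_prim) !modn_small ?/N; [move/eqP; nia | nia | nia].
move=> x; rewrite in_cons mem_enum inSubE => /orP[/eqP -> | /mapP [j _ ->]].
  by rewrite expr0n expn_eq0.
rewrite -exprM (eq_prim_root_expr rho_prim).
by rewrite (_ : (Q + 1) * j * Q = j * N + (Q + 1) * j)%N ?modnMDl // /N; nia.
Qed.

Lemma prim_root_unit_circle (F : finFieldType) (k : nat) (rho : F) : (0 < k)%N ->
    (2 ^ (4 * k) - 1).-primitive_root rho ->
  let om := rho ^+ ((2 ^ k - 1) * (2 ^ (2 * k) + 1)) in frob k om * om = 1 /\ om != 1.
Proof.
move=> k_gt0 rho_prim om; set q := (2 ^ k)%N.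
have q_gt1 : (1 < q)%N by rewrite -{1}(expn0 2) ltn_exp2l.
have q2E : (2 ^ (2 * k) = q * q)%N by rewrite /q -expnD addnn mul2n.
have q4E : (2 ^ (4 * k) = q * q * (q * q))%N by rewrite /q -!expnD; congr (2 ^ _)%N; lia.
split.
  rewrite /frob -exprSr /om -exprM -/q.
  rewrite (_ : _ * q.+1 = 2 ^ (4 * k) - 1)%N ?prim_expr_order // q2E q4E; nia.
rewrite /om -(expr0 rho) (eq_prim_root_expr rho_prim) mod0n q2E q4E modn_small; last by nia.
by rewrite -lt0n; nia.
Qed.

Theorem lemma4 (F : finFieldType) (k : nat) (hk : (2 <= k)%N)
  (hF : #|F| = (2 ^ (4 * k))%N) (rho : F)
  (hrho : (2 ^ (4 * k) - 1)%N.-primitive_root rho) :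
  let n := (4 * k)%N in
  let omega := rho ^+ ((2 ^ k - 1) * (2 ^ (2 * k) + 1)) in
  let lam0 := (omega + omega ^+ (2 ^ k))^-1 in
  [/\ lam0 != 0 /\ inSub k lam0,
      tr1 k lam0 = 1,
      self_dual n (Gl k omega lam0),
      (forall lam : F, lam != 0 -> inSub k lam ->
         let P := fun d : F => [/\ d != 0, inSub k d & d ^+ (2 ^ k + 1) = lam / lam0] in
         (exists d, P d) /\ (forall d1 d2, P d1 -> P d2 -> d1 = d2) /\
         (forall d, P d -> forall x, dual n (Gl k omega lam) x = Gl k omega lam0 (d^-1 * x)))
    & (forall a b : F, a != 0 -> b != 0 -> inSub (2 * k) a -> inSub (2 * k) b ->
         inSub k (a * b ^+ (2 ^ k)) ->
         forall lam : F, lam != 0 -> inSub k lam -> tr1 k lam = 1 ->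
         forall x, DD (dual n (Gl k omega lam)) a b x = false)].
Proof.
move=> n omega lam0.
have k_gt0 : (0 < k)%N by apply: ltnW.
have charF : 2%N \in [pchar F] by apply: (card_finPcharP hF).
have expF (x : F) : x ^+ (2 ^ (4 * k)) = x by rewrite -hF expf_card.
have [om_circle om_neq1] := prim_root_unit_circle k_gt0 hrho.
have card_Fq2 : #|@inSub F (2 * k)| = (2 ^ (2 * k))%N.
  by apply: (card_inSub_half (rho := rho)); rewrite ?muln_gt0 // mulnA.
split.
- by split; [exact: lam0_neq0 | apply/eqP; exact: frob_lam0].
- exact: tr1_lam0.
- exact: self_dual_Gl_lam0.
- exact: dual_Gl_delta.
-
  move=> a b _ _ _ b_sub ab_sub lam lam_neq0 lam_sub _.
  by apply: DD_dual_Gl => //; apply/eqP.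
Qed.
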